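(* Consider Cobb--Douglas exchange economies with $n=2$ agents and $m=2$ commodities in which both agents hold a strictly positive amount of both commodities. Then the incentive ratio over this class of economies is $e^{1/e}$: for every such economy, every agent $i$ with true Cobb--Douglas utility $u_i$ and every Cobb--Douglas misreport $u_i'$, $$\frac{\max_{x'\in\mathcal{E}(u_i')}u_i(x_i')}{\min_{x\in\mathcal{E}(u_i)}u_i(x_i)}\le e^{1/e},$$ and this bound is tight.
   Context: An exchange economy with $n$ agents and $m$ commodities is a tuple $((u_i)_{i=1}^n,(e_i)_{i=1}^n)$, where $u_i:\mathbb{R}_+^m\to\mathbb{R}$ is agent $i$'s utility and $e_i\in\mathbb{R}_+^m$ its endowment; without loss of generality total endowment of each commodity is $1$. Given prices $p$, agent $i$'s demand is the set of maximizers of $u_i(x_i)$ subject to $p\cdot x_i\le p\cdot e_i$, $x_i\ge0$. A competitive equilibrium is a pair $(p,x)$, $p\in\mathbb{R}_+^m$, with markets clearing and each $x_i$ in agent $i$'s demand at $p$. With $u_{-i}$ and $e$ fixed, $\mathcal{E}(\tilde u_i)$ is the set of competitive equilibrium allocations when agent $i$ reports $\tilde u_i$ and all others report truthfully. The incentive ratio of a class of economies is the supremum over economies in the class, agents $i$ and admissible misreports $u_i'$ of $\max_{x'\in\mathcal{E}(u_i')}u_i(x_i')/\min_{x\in\mathcal{E}(u_i)}u_i(x_i)$ (misreported outcomes are evaluated by the true $u_i$). Cobb--Douglas utilities are $u(x)=\prod_{j=1}^m x_j^{\alpha_j}$ with $0\le\alpha_j\le1$, $\sum_j\alpha_j=1$.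 *)

From HB Require Import structures.
From mathcomp Require Import all_boot all_order all_algebra.
From mathcomp Require Import reals sequences exp.
Set Implicit Arguments. Unset Strict Implicit. Unset Printing Implicit Defensive.
Import Order.TTheory GRing.Theory Num.Theory.
Local Open Scope ring_scope.

Section Economy.
Variable R : realType.
Variables n m : nat.

(* A bundle of goods / a price vector / Cobb-Douglas exponent vector. *)
Definition bundle := 'I_m -> R.

Definition is_CD (a : bundle) : Prop :=
  (forall j, 0 <= a j <= 1) /\ \sum_(j < m) a j = 1.

(* u(x) = prod_j x_j ^ alpha_j, with powR (0 `^ 0 = 1). *)
Definition cd_util (a x : bundle) : R := \prod_(j < m) (x j) `^ (a j).

Definition budget (p e x : bundle) : Prop :=
  (forall j, 0 <= x j) /\ \sum_(j < m) p j * x j <= \sum_(j < m) p j * e j.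

Definition demand (a p e x : bundle) : Prop :=
  budget p e x /\ forall y, budget p e y -> cd_util a y <= cd_util a x.

Definition is_CE (a e : 'I_n -> bundle) (p : bundle) (x : 'I_n -> bundle) : Prop :=
  (forall j, 0 <= p j) /\
  (forall j, \sum_(i < n) x i j = \sum_(i < n) e i j) /\
  (forall i, demand (a i) p (e i) (x i)).

Definition CE_alloc (a e : 'I_n -> bundle) (x : 'I_n -> bundle) : Prop :=
  exists p, is_CE a e p x.

Definition pos_normalized (e : 'I_n -> bundle) : Prop :=
  (forall i j, 0 < e i j) /\ (forall j, \sum_(i < n) e i j = 1).

Definition misreport (a : 'I_n -> bundle) (i : 'I_n) (b : bundle) : 'I_n -> bundle :=
  fun k => if k == i then b else a k.

End Economy.

(* A Cobb-Douglas agent with exponents g spends exactly the share g_j of its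
   wealth on good j: a good it wants cannot be free, as its utility would then
   be unbounded, and by Gibbs' inequality every other affordable bundle is worse.
   Upper bound: let q be the truthful equilibrium prices, p those after agent i
   misreports, and x the bundle agent i then receives.  Only the other agent's
   demand at p constrains x.  Combining it with market clearing at q shows that,
   for the good j that is relatively cheaper at q than at p, the bundle x with
   its j-th coordinate multiplied by agent i's true exponent a_j is affordable
   at q.  This costs the factor a_j ^ a_j >= e^(-1/e) in utility, and agent i's
   truthful bundle is optimal at q.
   Tightness: give agent 0 exponents (c, 1 - c) and endowment (1/2, t), agent 1
   exponents (1, 0) and endowment (1/2, 1 - t).  Reporting (1, 0) drives the
   price of good 1 to zero and multiplies agent 0's utility by
   ((1 - (1 - c) t) / c) ^ c, which tends to c ^ (-c) = e^(1/e) for c = 1/e. *)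

From HB Require Import structures.
From mathcomp Require Import all_boot all_order all_algebra.
From mathcomp Require Import reals sequences exp.
From mathcomp Require Import ring lra.
Set Implicit Arguments. Unset Strict Implicit. Unset Printing Implicit Defensive.
Import Order.TTheory GRing.Theory Num.Theory.
Local Open Scope ring_scope.

Section LnInequalities.
Variable R : realType.
Implicit Types (g d y : R).

Lemma ln_le_subr1 y : 0 < y -> ln y <= y - 1.
Proof. by move=> y0; have := @le_ln1Dx R (y - 1); rewrite (addrC 1) subrK; apply; lra. Qed.

Lemma ln_lt_subr1 y : 0 < y -> y != 1 -> ln y < y - 1.
Proof.
move=> y0 y1; rewrite -ltr_expR lnK ?posrE //.
by have := @expR_gt1Dx R (y - 1); rewrite (addrC 1) subrK subr_eq0; apply.
Qed.

Lemma ln_ratio_leif g d : 0 <= g -> 0 <= d -> (0 < g -> 0 < d) ->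
  g * (ln d - ln g) <= d - g ?= iff (d == g).
Proof.
move=> g0 d0 gd; have [->|gn0] := eqVneq g 0.
  by rewrite mul0r subr0; split; rewrite // eq_sym.
have gp : 0 < g by rewrite lt_neqAle eq_sym gn0.
have dp := gd gp.
have -> : d - g = g * (d / g - 1) by field.
rewrite -ln_div ?posrE //; have [->|dg] := eqVneq d g.
  by rewrite divff // ln1 subrr; apply/leif_refl.
have dg1 : d / g != 1 by rewrite (can2_eq (divfK gn0) (mulfK gn0)) mul1r.
have lt : g * ln (d / g) < g * (d / g - 1).
  by rewrite ltr_pM2l // ln_lt_subr1 // divr_gt0.
by split; [exact: ltW | rewrite lt_eqF].
Qed.

Lemma gibbs_leif (I : finType) (g d : I -> R) :
  (forall i, 0 <= g i) -> (forall i, 0 <= d i) -> (forall i, 0 < g i -> 0 < d i) ->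
  \sum_i g i = 1 ->
  \sum_i g i * (ln (d i) - ln (g i)) <= \sum_i d i - 1 ?= iff [forall i, d i == g i].
Proof.
move=> g0 d0 gd g1; rewrite -g1 -sumrB.
exact: leif_sum (fun i _ => ln_ratio_leif (g0 i) (d0 i) (gd i)).
Qed.

Lemma powR_self_ge g : 0 <= g -> expR (- (expR 1)^-1) <= g `^ g.
Proof.
rewrite le_eqVlt => /predU1P[<-|gp].
  by rewrite powRr0 expR_le1 oppr_le0 invr_ge0 expR_ge0.
rewrite /powR gt_eqF // ler_expR.
have ge0 : 0 < g * expR 1 by rewrite mulr_gt0 ?expR_gt0.
have := @ln_le_subr1 ((g * expR 1)^-1); rewrite invr_gt0 => /(_ ge0).
rewrite lnV ?posrE // lnM ?posrE ?expR_gt0 // expRK invfM.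
move=> h; have : g * (- ln g) <= g * (g^-1 * (expR 1)^-1).
  by apply: ler_wpM2l; [exact: ltW | lra].
by rewrite mulrA mulfV ?gt_eqF // mul1r; lra.
Qed.

End LnInequalities.

Section CobbDouglasDemand.
Variables (R : realType) (m : nat).
Implicit Types (g p e x y : 'I_m -> R) (w c : R).

Definition cost p x : R := \sum_(j < m) p j * x j.

Lemma cd_util_ge0 g x : 0 <= cd_util g x.
Proof. by apply: prodr_ge0 => j _; apply: powR_ge0. Qed.

Lemma cd_util_expR g x : (forall j, 0 <= g j) -> (forall j, 0 < g j -> 0 < x j) ->
  cd_util g x = expR (\sum_j g j * ln (x j)).
Proof.
move=> g0 gx; rewrite expR_sum; apply: eq_bigr => j _.
have [->|gj] := eqVneq (g j) 0; first by rewrite powRr0 mul0r expR0.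
by rewrite /powR gt_eqF // gx // lt_neqAle eq_sym gj g0.
Qed.

Lemma cd_util_split g x j :
  cd_util g x = x j `^ g j * \prod_(k | k != j) x k `^ g k.
Proof. exact: bigD1. Qed.

Lemma cd_util_set g x j c :
  cd_util g [eta x with j |-> c] = c `^ g j * \prod_(k | k != j) x k `^ g k.
Proof.
rewrite (cd_util_split _ _ j) /= eqxx; congr (_ * _).
by apply: eq_bigr => k /negbTE /= ->.
Qed.

Lemma cd_util_scale g x j c : 0 <= c -> 0 <= x j ->
  cd_util g [eta x with j |-> c * x j] = c `^ g j * cd_util g x.
Proof. by move=> c0 xj0; rewrite cd_util_set powRM // -mulrA -cd_util_split. Qed.

Lemma cd_util_eq0 g x j : x j = 0 -> g j != 0 -> cd_util g x = 0.
Proof. by move=> xj gj; rewrite (cd_util_split _ _ j) xj powR0 // mul0r. Qed.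

Lemma cost_shares g p x w : \sum_j g j = 1 -> (forall j, p j * x j = g j * w) ->
  cost p x = w.
Proof. by move=> g1 px; rewrite /cost (eq_bigr _ (fun j _ => px j)) -mulr_suml g1 mul1r. Qed.

Lemma shares_gt0 g p x w j : (forall k, 0 <= p k) -> 0 < w ->
  (forall k, p k * x k = g k * w) -> 0 < g j -> 0 < p j /\ 0 < x j.
Proof.
move=> p0 w0 px gj; have pxj : 0 < p j * x j by rewrite px mulr_gt0.
have pj : 0 < p j.
  by rewrite lt_neqAle p0 andbT; apply: contraTneq pxj => <-; rewrite mul0r ltxx.
by split; rewrite // -(pmulr_rgt0 _ pj).
Qed.

Lemma cd_util_ratio g p x y w : (forall j, 0 <= g j) -> (forall j, 0 <= p j) -> 0 < w ->
  (forall j, p j * x j = g j * w) -> (forall j, 0 < g j -> 0 < y j) ->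
  cd_util g y = cd_util g x * expR (\sum_j g j * (ln (p j * y j / w) - ln (g j))).
Proof.
move=> g0 p0 w0 px gy.
have gpx j : 0 < g j -> 0 < p j /\ 0 < x j by exact: shares_gt0 p0 w0 px.
rewrite !cd_util_expR // => [|j /gpx[] //].
rewrite -expRD -big_split /=; congr expR; apply: eq_bigr => j _.
have [->|gj] := eqVneq (g j) 0; first by rewrite !mul0r addr0.
have gjp : 0 < g j by rewrite lt_neqAle eq_sym gj g0.
have [pjp xjp] := gpx j gjp; have yjp := gy j gjp.
rewrite -mulrDr; congr (_ * _).
have h := congr1 (@ln R) (px j); rewrite !lnM ?posrE // in h.
by rewrite ln_div ?posrE ?mulr_gt0 // lnM ?posrE //; lra.
Qed.

Lemma cd_util_le_shares g p x y w : is_CD g -> (forall j, 0 <= p j) -> 0 < w ->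
  (forall j, p j * x j = g j * w) -> (forall j, 0 <= y j) -> cost p y <= w ->
  cd_util g y <= cd_util g x /\
  (cd_util g x <= cd_util g y -> forall j, p j * y j = g j * w).
Proof.
move=> [g01 g1] p0 w0 px y0 yw.
have g0 j : 0 <= g j by case/andP: (g01 j).
have gpx j : 0 < g j -> 0 < p j /\ 0 < x j by exact: shares_gt0 p0 w0 px.
have ux : 0 < cd_util g x by rewrite (cd_util_expR g0) ?expR_gt0 // => j /gpx[].
have [/existsP[j /andP[gj /eqP yj]]|] := boolP [exists j, (0 < g j) && (y j == 0)].
  rewrite (cd_util_eq0 yj) ?gt_eqF //.
  by split=> [|/(lt_le_trans ux)]; [exact: ltW | rewrite ltxx].
rewrite negb_exists => /forallP yn0.
have gy j : 0 < g j -> 0 < y j.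
  by move=> gj; move: (yn0 j); rewrite gj lt_neqAle eq_sym y0 andbT.
pose d j := p j * y j / w.
have d0 j : 0 <= d j by rewrite divr_ge0 ?mulr_ge0 // ltW.
have gd j : 0 < g j -> 0 < d j.
  by move=> gj; rewrite divr_gt0 ?mulr_gt0 //; [case: (gpx j gj) | apply: gy].
have d1 : \sum_j d j <= 1 by rewrite -mulr_suml ler_pdivrMr // mul1r.
have [Sle Seq] := gibbs_leif g0 d0 gd g1.
rewrite (cd_util_ratio g0 p0 w0 px gy) -/(d _); split.
  by rewrite ger_pMr // expR_le1; lra.
rewrite ler_pMr // -expR0 ler_expR => S0.
have : (\sum_j g j * (ln (d j) - ln (g j)) == \sum_j d j - 1) by rewrite eq_le Sle; lra.
rewrite Seq => /forallP dg j; move/eqP: (dg j) => <-.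
by rewrite /d divfK ?gt_eqF.
Qed.

Lemma demand_price_gt0 g p e x j : (forall k, 0 <= p k) -> (forall k, 0 < e k) ->
  demand g p e x -> 0 < g j -> 0 < p j.
Proof.
move=> p0 e0 [_ xmax] gj; rewrite lt_neqAle p0 andbT; apply/eqP => pj.
pose C := \prod_(k | k != j) e k `^ g k.
have C0 : 0 < C by apply: prodr_gt0 => k _; apply: powR_gt0.
(* If good j were free, e with its j-th entry replaced by M would be affordable
   and would beat x. *)
pose M := ((cd_util g x + 1) / C) `^ (g j)^-1.
have : cd_util g [eta e with j |-> M] <= cd_util g x.
  apply: xmax; split=> [k /=|]; first by case: eqP => _; [apply: powR_ge0 | apply: ltW].
  by apply: ler_sum => k _ /=; case: eqP => [->|_]; rewrite -?pj ?mul0r.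
rewrite cd_util_set -/C -powRrM mulVf ?gt_eqF // powRr1; last first.
  by rewrite divr_ge0 ?addr_ge0 ?cd_util_ge0 // ltW.
by rewrite divfK ?gt_eqF //; lra.
Qed.

Lemma demand_cost_gt0 g p e x : is_CD g -> (forall k, 0 <= p k) -> (forall k, 0 < e k) ->
  demand g p e x -> 0 < cost p e.
Proof.
move=> [g01 g1] p0 e0 dx.
have : \sum_j g j != 0 by rewrite g1 oner_eq0.
rewrite psumr_neq0 => [/hasP[j _ /andP[_ gj]]|j _]; last by case/andP: (g01 j).
have pj := demand_price_gt0 p0 e0 dx gj.
rewrite /cost (bigD1 j) //= ltr_wpDr ?mulr_gt0 //.
by apply: sumr_ge0 => k _; rewrite mulr_ge0 // ltW.
Qed.

Lemma demand_shares g p e x : is_CD g -> (forall k, 0 <= p k) -> (forall k, 0 < e k) ->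
  demand g p e x -> forall j, p j * x j = g j * cost p e.
Proof.
move=> CDg p0 e0 dx; have w0 := demand_cost_gt0 CDg p0 e0 dx.
have g0 j : 0 <= g j by case/andP: (CDg.1 j).
(* When p j = 0 the division returns 0, which is harmless since then g j = 0. *)
pose z j := g j * cost p e / p j.
have pz j : p j * z j = g j * cost p e.
  have := g0 j; rewrite le_eqVlt => /predU1P[gj0|gj].
    by rewrite /z -gj0 !mul0r mulr0.
  by rewrite mulrC divfK // gt_eqF // (demand_price_gt0 p0 e0 dx gj).
have z0 j : 0 <= z j by rewrite divr_ge0 ?mulr_ge0 // ltW.
have [[x0 xe] xmax] := dx.
have [_] := cd_util_le_shares CDg p0 w0 pz x0 xe; apply; apply: xmax.
by split=> //; rewrite -/(cost p z) (cost_shares CDg.2 pz).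
Qed.

Lemma shares_demand g p e x : is_CD g -> (forall k, 0 <= p k) -> (forall k, 0 <= x k) ->
  0 < cost p e -> (forall j, p j * x j = g j * cost p e) -> demand g p e x.
Proof.
move=> CDg p0 x0 w0 px; split.
  by split=> //; rewrite -/(cost p x) (cost_shares CDg.2 px).
by move=> y [y0 ye]; have [] := cd_util_le_shares CDg p0 w0 px y0 ye.
Qed.

Lemma cd_util_le_of_scaled g q e x X j : is_CD g -> (forall k, 0 <= x k) ->
  demand g q e X -> cost q [eta x with j |-> g j * x j] <= cost q e ->
  cd_util g x <= expR (expR 1)^-1 * cd_util g X.
Proof.
move=> CDg x0 [_ Xmax] scaled.
have gj0 : 0 <= g j by case/andP: (CDg.1 j).
have scaled_budget : budget q e [eta x with j |-> g j * x j].
  by split=> // k /=; case: eqP => _; rewrite ?mulr_ge0.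
have := Xmax _ scaled_budget; rewrite cd_util_scale // => le.
have := le_trans (ler_wpM2r (cd_util_ge0 _ _) (powR_self_ge gj0)) le.
move/(ler_wpM2l (expR_ge0 (expR 1)^-1)).
by rewrite mulrA expRxMexpNx_1 mul1r.
Qed.

End CobbDouglasDemand.

Lemma sum_ord2 (V : nmodType) (F : 'I_2 -> V) : \sum_(j < 2) F j = F ord0 + F ord_max.
Proof. by rewrite big_ord_recl big_ord1; congr (_ + F _); apply: val_inj. Qed.

Lemma sum_ord2_lift (V : nmodType) (F : 'I_2 -> V) i :
  \sum_(k < 2) F k = F i + F (lift i ord0).
Proof.
rewrite sum_ord2; case: i => [[|[|//]] i2].
  by congr (F _ + F _); apply: val_inj.
by rewrite addrC; congr (F _ + F _); apply: val_inj.
Qed.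

Section TwoByTwo.
Variable R : realType.

(* Roles: (s, t) is the endowment of the misreporting agent, a its true
   exponent for good 0 and b the other agent's; p and q are the prices with and
   without the misreport; x is the misreporting agent's bundle, the other agent
   receiving 1 - x. *)
Lemma scaled_bundle_cost_le_pos (a b s t p0 p1 q0 q1 x0 x1 : R) :
  0 <= a <= 1 -> 0 <= b <= 1 -> 0 < s < 1 -> 0 < t < 1 ->
  0 < p0 -> 0 < p1 -> 0 <= q0 -> 0 < q1 ->
  p0 * (1 - x0) = b * (p0 * (1 - s) + p1 * (1 - t)) ->
  p1 * (1 - x1) = (1 - b) * (p0 * (1 - s) + p1 * (1 - t)) ->
  q1 = (1 - a) * (q0 * s + q1 * t) + (1 - b) * (q0 * (1 - s) + q1 * (1 - t)) ->
  q0 * p1 <= p0 * q1 ->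
  q0 * (a * x0) + q1 * x1 <= q0 * s + q1 * t.
Proof.
move=> /andP[a0 a1] /andP[b0 b1] /andP[s0 s1] /andP[t0 t1] p0p p1p q0g q1p Ex0 Ex1 Eq1 D.
(* Every summand on the right is nonnegative once q0 p1 <= p0 q1. *)
have cert : q1 * p0 * p1 * (q0 * s + q1 * t - (q0 * (a * x0) + q1 * x1)) =
    a * (1 - a) * (q0 * s + q1 * t) * q0 * p1 ^+ 2 + a * t * q1 * p1 * (p0 * q1 - q0 * p1)
    + (1 - b) * (1 - s) * (p0 * q1 - q0 * p1) * (p0 * q1 - a * q0 * p1).
  transitivity (q1 * p0 * p1 * (q0 * s + q1 * t) - a * q0 * q1 * p1 * (p0 * x0)
                - q1 ^+ 2 * p0 * (p1 * x1)); first by ring.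
  have -> : p0 * x0 = p0 - b * (p0 * (1 - s) + p1 * (1 - t)) by lra.
  have -> : p1 * x1 = p1 - (1 - b) * (p0 * (1 - s) + p1 * (1 - t)) by lra.
  apply/eqP; rewrite -subr_eq0; apply/eqP.
  transitivity ((p0 * p1 * q1 - a * q0 * p1 ^+ 2) *
    ((1 - a) * (q0 * s + q1 * t) + (1 - b) * (q0 * (1 - s) + q1 * (1 - t)) - q1)).
    by ring.
  by rewrite -Eq1 subrr mulr0.
have aq : a * (q0 * p1) <= q0 * p1 by rewrite ler_piMl ?mulr_ge0 // ltW.
have W0 : 0 <= q0 * s + q1 * t by rewrite addr_ge0 ?mulr_ge0 // ltW.
have : 0 <= q1 * p0 * p1 * (q0 * s + q1 * t - (q0 * (a * x0) + q1 * x1)).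
  rewrite cert; apply: addr_ge0; [apply: addr_ge0|]; rewrite !mulr_ge0 ?subr_ge0 //; lra.
by rewrite pmulr_rge0 ?mulr_gt0 // subr_ge0.
Qed.

Lemma scaled_bundle_cost_le (a b s t p0 p1 q0 q1 x0 x1 : R) :
  0 <= a <= 1 -> 0 <= b <= 1 -> 0 < s < 1 -> 0 < t < 1 ->
  0 <= p0 -> 0 <= p1 -> 0 <= q0 -> 0 <= q1 ->
  0 < p0 * (1 - s) + p1 * (1 - t) -> 0 < q0 * s + q1 * t -> x1 <= 1 ->
  p0 * (1 - x0) = b * (p0 * (1 - s) + p1 * (1 - t)) ->
  p1 * (1 - x1) = (1 - b) * (p0 * (1 - s) + p1 * (1 - t)) ->
  q0 = a * (q0 * s + q1 * t) + b * (q0 * (1 - s) + q1 * (1 - t)) ->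
  q1 = (1 - a) * (q0 * s + q1 * t) + (1 - b) * (q0 * (1 - s) + q1 * (1 - t)) ->
  q0 * p1 <= p0 * q1 ->
  q0 * (a * x0) + q1 * x1 <= q0 * s + q1 * t.
Proof.
move=> a01 b01 s01 t01 p0g p1g q0g q1g V0 W0 x1le Ex0 Ex1 Eq0 Eq1 D.
have [/andP[a0 a1] /andP[b0 b1]] := (a01, b01).
have [/andP[s0 s1] /andP[t0 t1]] := (s01, t01).
have [q1z|q1n] := eqVneq q1 0.
  subst q1; have q0s : 0 < q0 * s by lra.
  have q0s' : 0 < q0 * (1 - s) by rewrite mulr_gt0 // ?subr_gt0; nra.
  have [a1' b1'] : a = 1 /\ b = 1 by split; nra.
  subst a b.
  have [p0z|p0n] := eqVneq p0 0; first by subst p0; nra.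
  have p0p : 0 < p0 by rewrite lt_neqAle eq_sym p0n.
  nra.
have q1p : 0 < q1 by rewrite lt_neqAle eq_sym q1n.
have [p0z|p0n] := eqVneq p0 0.
  subst p0; have p1p : 0 < p1 by nra.
  have q0z : q0 = 0 by nra.
  subst q0; have q1t : 0 < q1 * t by rewrite mulr_gt0.
  have q1t' : 0 < q1 * (1 - t) by rewrite mulr_gt0 // subr_gt0.
  have [a0' b0'] : a = 0 /\ b = 0 by split; nra.
  subst a b.
  nra.
have p0p : 0 < p0 by rewrite lt_neqAle eq_sym p0n.
have [p1z|p1n] := eqVneq p1 0.
  subst p1; have b1' : b = 1 by nra.
  subst b; have -> : x0 = s by nra.
  have : q1 * x1 <= q1 by nra.
  have : 0 <= a * (q1 * t) by rewrite !mulr_ge0 // ltW.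
  nra.
have p1p : 0 < p1 by rewrite lt_neqAle eq_sym p1n.
exact: scaled_bundle_cost_le_pos a01 b01 s01 t01 p0p p1p q0g q1p Ex0 Ex1 Eq1 D.
Qed.

Lemma misreport_scaled_affordable (a b e1 e2 p q x xo X Xo : 'I_2 -> R) (j : 'I_2) :
  is_CD a -> is_CD b -> (forall l, 0 < e1 l) -> (forall l, 0 < e2 l) ->
  (forall l, e1 l + e2 l = 1) ->
  (forall l, 0 <= p l) -> (forall l, x l + xo l = 1) -> demand b p e2 xo ->
  (forall l, 0 <= q l) -> (forall l, X l + Xo l = 1) -> demand a q e1 X -> demand b q e2 Xo ->
  q j * p (lift j ord0) <= p j * q (lift j ord0) ->
  cost q [eta x with j |-> a j * x j] <= cost q e1.
Proof.
move=> CDa CDb e1p e2p e12 p0 xxo dxo q0 XXo dX dXo D.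
set o := lift j ord0 in D *.
have sum2 (F : 'I_2 -> R) : \sum_k F k = F j + F o by exact: sum_ord2_lift.
have e2E l : e2 l = 1 - e1 l by have := e12 l; lra.
have e1_01 l : 0 < e1 l < 1 by have := e2p l; rewrite e2E (e1p l); lra.
have CD2 (g : 'I_2 -> R) : is_CD g -> 0 <= g j <= 1 /\ g o = 1 - g j.
  by case=> g01; rewrite sum2 => g1; split; [apply: g01 | lra].
have [aj ao] := CD2 _ CDa; have [bj bo] := CD2 _ CDb.
have V0 := demand_cost_gt0 CDb p0 e2p dxo.
have W0 := demand_cost_gt0 CDa q0 e1p dX.
have q_eq l : q l = a l * cost q e1 + b l * cost q e2.
  by rewrite -(demand_shares CDa q0 e1p dX) -(demand_shares CDb q0 e2p dXo) -mulrDr XXo mulr1.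
have p_eq l : p l * (1 - x l) = b l * cost p e2.
  by rewrite -(demand_shares CDb p0 e2p dxo); congr (_ * _); have := xxo l; lra.
have x1 : x o <= 1 by have [[xo0 _] _] := dxo; have := xo0 o; have := xxo o; lra.
have oj : (o == j) = false by rewrite eq_sym (negbTE (neq_lift _ _)).
move: V0 W0 (p_eq j) (p_eq o) (q_eq j) (q_eq o).
rewrite /cost !sum2 !e2E ao bo /= eqxx oj.
move=> V0 W0 Ex0 Ex1 Eq0 Eq1.
exact: (scaled_bundle_cost_le aj bj (e1_01 j) (e1_01 o) (p0 j) (p0 o) (q0 j) (q0 o)
  V0 W0 x1 Ex0 Ex1 Eq0 Eq1 D).
Qed.

Lemma misreport_util_le (a b e1 e2 p q x xo X Xo : 'I_2 -> R) :
  is_CD a -> is_CD b -> (forall l, 0 < e1 l) -> (forall l, 0 < e2 l) ->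
  (forall l, e1 l + e2 l = 1) ->
  (forall l, 0 <= p l) -> (forall l, 0 <= x l) -> (forall l, x l + xo l = 1) ->
  demand b p e2 xo ->
  (forall l, 0 <= q l) -> (forall l, X l + Xo l = 1) -> demand a q e1 X -> demand b q e2 Xo ->
  cd_util a x <= expR (expR 1)^-1 * cd_util a X.
Proof.
move=> CDa CDb e1p e2p e12 p0 x0 xxo dxo q0 XXo dX dXo.
have [j D] : exists j, q j * p (lift j ord0) <= p j * q (lift j ord0).
  have [D|D] := lerP (q ord0 * p ord_max) (p ord0 * q ord_max).
    by exists ord0; rewrite (_ : lift _ _ = ord_max) //; apply: val_inj.
  by exists ord_max; rewrite (_ : lift _ _ = ord0); [lra | apply: val_inj].
apply: (cd_util_le_of_scaled CDa x0 dX).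
exact: misreport_scaled_affordable CDa CDb e1p e2p e12 p0 xxo dxo q0 XXo dX dXo D.
Qed.

Lemma misreport_gain_le (a e : 'I_2 -> 'I_2 -> R) (i : 'I_2) (b : 'I_2 -> R) :
  (forall k, is_CD (a k)) -> pos_normalized e -> is_CD b ->
  forall x x' : 'I_2 -> 'I_2 -> R,
  CE_alloc (misreport a i b) e x' -> CE_alloc a e x ->
  cd_util (a i) (x' i) <= expR (expR 1)^-1 * cd_util (a i) (x i).
Proof.
(* The reported exponents b never matter: only agent i's budget at p is used. *)
move=> CDa [e0 e1] _ x x' [p [p0 [clear' dem']]] [q [q0 [clear dem]]].
set o := lift i ord0.
have sum2 (F : 'I_2 -> R) : \sum_k F k = F i + F o by exact: sum_ord2_lift.
have dem'o := dem' o; rewrite /misreport eq_sym (negbTE (neq_lift _ _)) in dem'o.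
have [[x'0 _] _] := dem' i.
apply: (misreport_util_le (CDa i) (CDa o) (e0 i) (e0 o) _ p0 x'0 _ dem'o q0 _ (dem i) (dem o)).
- by move=> l; rewrite -(e1 l) sum2.
- by move=> l; move: (clear' l) (e1 l); rewrite !sum2 => ->.
- by move=> l; move: (clear l) (e1 l); rewrite !sum2 => ->.
Qed.

End TwoByTwo.

Definition vec2 (T : Type) (z0 z1 : T) : 'I_2 -> T := fun j => if j == ord0 then z0 else z1.

Section TightExample.
Variables (R : realType) (c t : R).
Hypotheses (c01 : 0 < c < 1) (t01 : 0 < t < 1).

Lemma cd_util2 (g x : 'I_2 -> R) : cd_util g x = x ord0 `^ g ord0 * x ord_max `^ g ord_max.
Proof.
by rewrite /cd_util big_ord_recl big_ord1 (_ : lift _ _ = ord_max) //; apply: val_inj.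
Qed.

Lemma is_CD_vec2 (z : R) : 0 <= z <= 1 -> is_CD (vec2 z (1 - z)).
Proof.
move=> /andP[z0 z1]; split; first by move=> j; rewrite /vec2; case: eqP => _; lra.
by rewrite sum_ord2 /vec2 /=; lra.
Qed.

Definition tight_prefs : 'I_2 -> 'I_2 -> R := vec2 (vec2 c (1 - c)) (vec2 1 0).
Definition tight_endow : 'I_2 -> 'I_2 -> R := vec2 (vec2 2^-1 t) (vec2 2^-1 (1 - t)).
Let d := 1 - (1 - c) * t.

Let c_lt_d : c < d.
Proof.
case/andP: c01 => _ c1; case/andP: t01 => _ t1.
have : 0 < (1 - c) * (1 - t) by rewrite mulr_gt0 // subr_gt0.
rewrite /d; lra.
Qed.

Lemma tight_prefs_CD k : is_CD (tight_prefs k).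
Proof.
rewrite /tight_prefs {1}/vec2; case: eqP => _.
  by apply: is_CD_vec2; case/andP: c01 => *; apply/andP; split; lra.
by rewrite -[0 : R](subrr 1); apply: is_CD_vec2; rewrite ler01 lexx.
Qed.

Lemma tight_endow_pos : pos_normalized tight_endow.
Proof.
case/andP: t01 => t0 t1; split=> [i j|j]; rewrite /tight_endow.
  by rewrite /vec2; do 2 case: eqP => _; lra.
by rewrite sum_ord2 /vec2 /=; case: eqP => _; lra.
Qed.

Lemma tight_truthful_CE :
  CE_alloc tight_prefs tight_endow (vec2 (vec2 (c / (2 * d)) 1) (vec2 (1 - c / (2 * d)) 0)).
Proof.
case/andP: c01 => c0 c1; case/andP: t01 => t0 t1.
have dc := c_lt_d.
have cd : c / (2 * d) <= 1 by rewrite ler_pdivrMr; lra.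
have q0 j : 0 <= vec2 (2 * d) (1 - c) j by rewrite /vec2; case: eqP => _; lra.
(* These prices give agent 0 wealth exactly 1. *)
exists (vec2 (2 * d) (1 - c)); split=> //; split.
  by move=> j; rewrite !sum_ord2 /tight_endow /vec2 /=; case: eqP => _ /=; lra.
have dp : 0 < d by lra.
have W1 : 2 * d / 2 + (1 - c) * t = 1 by rewrite /d; field.
move=> i; apply: shares_demand (tight_prefs_CD i) q0 _ _ _;
  rewrite /tight_prefs /tight_endow /cost /vec2 ?sum_ord2 /=; case: eqP => _ /=.
- by move=> j; case: eqP => _; rewrite ?divr_ge0 ?ler01 //; lra.
- by move=> j; case: eqP => _; rewrite ?subr_ge0.
- by rewrite W1 ltr01.
- lra.
- by move=> j; case: eqP => _; rewrite W1 mulr1 // mulrC divfK // gt_eqF ?mulr_gt0.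
- move=> j; case: eqP => _; rewrite ?mulr0 ?mul0r //.
  by rewrite /d; field; exact: lt0r_neq0 dp.
Qed.

Lemma tight_truthful_util x : CE_alloc tight_prefs tight_endow x ->
  cd_util (tight_prefs ord0) (x ord0) = (c / (2 * d)) `^ c.
Proof.
case=> q [q0 [clear dem]]; case/andP: c01 => c0 c1; case/andP: t01 => t0 t1.
have c1' : 0 < 1 - c by rewrite subr_gt0.
have dp : 0 < d := lt_trans c0 c_lt_d.
have shares i := demand_shares (tight_prefs_CD i) q0 (tight_endow_pos.1 i) (dem i).
have W0 := demand_cost_gt0 (tight_prefs_CD ord0) q0 (tight_endow_pos.1 ord0) (dem ord0).
move: (shares ord0 ord0) (shares ord0 ord_max) (shares ord_max ord_max) (clear ord_max) W0.
rewrite cd_util2 /tight_prefs /tight_endow /cost /vec2 !sum_ord2 /= mul0r.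
move=> S00 S01 S11 C1 W0.
have q1 : 0 < q ord_max.
  have qx : 0 < q ord_max * x ord0 ord_max by rewrite S01 mulr_gt0 // subr_gt0.
  by rewrite lt_neqAle q0 andbT; apply: contraTneq qx => <-; rewrite mul0r ltxx.
have x11 : x ord_max ord_max = 0 by move/eqP: S11; rewrite mulf_eq0 gt_eqF // => /eqP.
have x01 : x ord0 ord_max = 1 by lra.
rewrite x01 mulr1 in S01.
have q_ratio : 2 * d * q ord_max = (1 - c) * q ord0 by rewrite /d; lra.
have q0p : 0 < q ord0 by rewrite -(pmulr_rgt0 _ c1') -q_ratio !mulr_gt0.
have : q ord0 * (2 * d * x ord0 ord0 - c) = 0.
  transitivity (2 * d * (q ord0 * x ord0 ord0) - c * q ord0); first by ring.
  rewrite S00; transitivity (c * t * (2 * d * q ord_max - (1 - c) * q ord0)).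
    by rewrite /d; field.
  by rewrite q_ratio subrr mulr0.
move/eqP; rewrite mulf_eq0 gt_eqF //= subr_eq0 => /eqP x00.
rewrite x01 powR1 mulr1; congr (_ `^ _).
by rewrite -x00 mulrC mulKf // gt_eqF // mulr_gt0.
Qed.

Lemma tight_misreport_CE :
  CE_alloc (misreport tight_prefs ord0 (vec2 1 0)) tight_endow
    (vec2 (vec2 2^-1 1) (vec2 2^-1 0)).
Proof.
case/andP: t01 => t0 t1.
have p0 j : 0 <= vec2 (1 : R) 0 j by rewrite /vec2; case: eqP => _; rewrite ?ler01.
exists (vec2 1 0); split=> //; split.
  by move=> j; rewrite !sum_ord2 /tight_endow /vec2 /=; case: eqP => _ /=; lra.
move=> i; rewrite (_ : misreport _ _ _ i = vec2 1 0); last first.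
  by rewrite /misreport /tight_prefs /vec2; case: eqP.
apply: shares_demand (tight_prefs_CD ord_max) p0 _ _ _;
  rewrite /tight_prefs /tight_endow /cost /vec2 ?sum_ord2 /=; case: (i == ord0) => /=;
  try (move=> j; case: (j == ord0)); rewrite /= ?mul0r ?mul1r ?addr0 ?invr_ge0 ?invr_gt0 //.
Qed.

Lemma tight_gain x : CE_alloc tight_prefs tight_endow x ->
  cd_util (tight_prefs ord0) (vec2 2^-1 1) =
    (d / c) `^ c * cd_util (tight_prefs ord0) (x ord0).
Proof.
case/andP: c01 => c0 _; have dp : 0 < d := lt_trans c0 c_lt_d.
move=> /tight_truthful_util ->; rewrite cd_util2 /tight_prefs /vec2 /= powR1 mulr1.
rewrite -powRM ?divr_ge0 ?mulr_ge0 ?ltW //.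
by congr (_ `^ _); field; rewrite !gt_eqF.
Qed.

End TightExample.

Lemma misreport_gain_approx (R : realType) (eps : R) : 0 < eps ->
  exists (a e : 'I_2 -> 'I_2 -> R) (i : 'I_2) (b : 'I_2 -> R),
    (forall k, is_CD (a k)) /\ pos_normalized e /\ is_CD b /\
    (exists x, CE_alloc a e x) /\
    exists x' : 'I_2 -> 'I_2 -> R,
      CE_alloc (misreport a i b) e x' /\
      forall x, CE_alloc a e x ->
        (expR (expR 1)^-1 - eps) * cd_util (a i) (x i) < cd_util (a i) (x' i).
Proof.
move=> eps0; pose c : R := (expR 1)^-1; pose k := expR c; pose t := eps / (k + eps).
have k0 : 0 < k := expR_gt0 c.
have c01 : 0 < c < 1 by rewrite invr_gt0 expR_gt0 invf_lt1 ?expR_gt0 // expR_gt1 ltr01.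
have t01 : 0 < t < 1.
  by rewrite divr_gt0 ?addr_gt0 //= ltr_pdivrMr ?addr_gt0 // mul1r ltrDr.
exists (tight_prefs c), (tight_endow t), ord0, (vec2 1 0).
split; first exact: tight_prefs_CD c01.
split; first exact: tight_endow_pos t01.
split; first exact: tight_prefs_CD c01 ord_max.
split; first by eexists; exact: tight_truthful_CE c01 t01.
exists (vec2 (vec2 2^-1 1) (vec2 2^-1 0)); split; first exact: tight_misreport_CE.
move=> x CEx; rewrite (tight_gain c01 t01 CEx) (tight_truthful_util c01 t01 CEx).
case/andP: c01 => c0 c1; case/andP: t01 => t0 t1.
set d := 1 - (1 - c) * t.
have dt : 1 - t <= d.
  have : 0 <= c * t by rewrite mulr_ge0 // ltW.
  rewrite /d; lra.
have d1 : d <= 1.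
  have : 0 <= (1 - c) * t by rewrite mulr_ge0 // ?subr_ge0 ltW.
  rewrite /d; lra.
have dp : 0 < d by lra.
rewrite ltr_pM2r ?powR_gt0 ?divr_gt0 ?mulr_gt0 //.
have ck : c^-1 `^ c = k by rewrite /k /c invrK -expRM mul1r.
rewrite powRM ?invr_ge0 ?expR_ge0 ?(ltW dp) // ck -/c -/k.
have kt : k * t < eps.
  by rewrite /t mulrA ltr_pdivrMr ?addr_gt0 //; nra.
have : k * (1 - t) <= k * d `^ c.
  by rewrite ler_pM2l // (le_trans dt) // ger1_powR ?dp //= ltW.
lra.
Qed.

Theorem proposition2 (R : realType) :
  (* upper bound: ratio <= e^{1/e} for all 2x2 CD economies with positive endowments *)
  (forall (a e : 'I_2 -> 'I_2 -> R) (i : 'I_2) (b : 'I_2 -> R),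
      (forall k, is_CD (a k)) -> pos_normalized e -> is_CD b ->
      forall x x' : 'I_2 -> 'I_2 -> R,
        CE_alloc (misreport a i b) e x' -> CE_alloc a e x ->
        cd_util (a i) (x' i) <= expR (expR 1)^-1 * cd_util (a i) (x i)) /\
  (* tightness: the supremum e^{1/e} is approached *)
  (forall eps : R, 0 < eps ->
     exists (a e : 'I_2 -> 'I_2 -> R) (i : 'I_2) (b : 'I_2 -> R),
       (forall k, is_CD (a k)) /\ pos_normalized e /\ is_CD b /\
       (exists x, CE_alloc a e x) /\
       exists x' : 'I_2 -> 'I_2 -> R,
         CE_alloc (misreport a i b) e x' /\
         forall x, CE_alloc a e x ->
           (expR (expR 1)^-1 - eps) * cd_util (a i) (x i) < cd_util (a i) (x' i)).
Proof. by split=> [|eps]; [exact: misreport_gain_le | exact: misreport_gain_approx]. Qed.
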